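(* In the setting below, there is a constant $\nu>0$ depending only on $c_0,\delta,r$ and $\eta$ such that for every $s>0$, every minimal family $\mathcal V\subset\mathcal U(s)$ (which is a covering of $X$) has local capacity $\operatorname{cap}_{\mathrm{loc}}(\mathcal V)\ge\nu$.
   Context: Setting: $f:X\to Y$ is an $\eta$-quasi-symmetric homeomorphism of metric spaces ($|xa|\le t|xb|\Rightarrow|f(x)f(a)|\le\eta(t)|f(x)f(b)|$, $\eta$ a homeomorphism of $[0,\infty)$), $X$ has at least two points, $n\ge0$, $c_0,\delta>0$, $r\in(0,1)$, and $\mathcal U_j$, $j\in\mathbb N$, are open coverings of $X$ such that: (i) there is a set $A$, $|A|=n+1$, with $\mathcal U_j=\bigcup_{a\in A}\mathcal U_j^a$, each $\mathcal U_j^a$ consisting of pairwise disjoint sets; (ii) $\delta r^j\le\operatorname{mesh}(\mathcal U_j)\le r^j$ and $L(\mathcal U_j)\ge c_0\operatorname{mesh}(\mathcal U_j)$; (iii) $\mathcal U_i$ is inscribed in $\mathcal U_j$ (each member of $\mathcal U_i$ lies in a member of $\mathcal U_j$) for $i>j$; (iv) for each $a\in A$, $\bigcup_j\mathcal U_j^a$ is separated (two different members are disjoint or nested); and additionally $\operatorname{diam}U\ge L(\mathcal U_j)$ for every $U\in\mathcal U_j$ and every $j$. Put $\mathcal U=\bigcup_j\mathcal U_j$ and $\mathcal U(s)=\{U\in\mathcal U:\operatorname{diam}f(U)\le s\}$. A subfamily $\mathcal V\subset\mathcal U(s)$ is minimal if every $U\in\mathcal U(s)$ is contained in some $V\in\mathcal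 V$ and no two different members of $\mathcal V$ are contained one in the other. Notation: $\operatorname{mesh}(\mathcal U,z)=\sup\{\operatorname{diam}U:z\in U\in\mathcal U\}$, $\operatorname{mesh}(\mathcal U)=\sup_U\operatorname{diam}U$, $L(\mathcal U,z)=\min\{\sup_{U\in\mathcal U}\operatorname{dist}(z,X\setminus U),\operatorname{mesh}(\mathcal U,z)\}$, $L(\mathcal U)=\inf_zL(\mathcal U,z)$, $\operatorname{cap}_{\mathrm{loc}}(\mathcal U)=\inf_zL(\mathcal U,z)/\operatorname{mesh}(\mathcal U,z)$. *)

From HB Require Import structures.
From mathcomp Require Import all_boot all_order all_algebra.
From mathcomp Require Import all_classical all_reals all_analysis.
Set Implicit Arguments. Unset Strict Implicit. Unset Printing Implicit Defensive.
Import Order.TTheory GRing.Theory Num.Theory.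
Local Open Scope classical_set_scope.
Local Open Scope ring_scope.

Section Defs.
Variable R : realType.

Definition is_metric (X : Type) (d : X -> X -> R) : Prop :=
  (forall x y, 0 <= d x y) /\ (forall x y, d x y = 0 <-> x = y) /\
  (forall x y, d x y = d y x) /\ (forall x y z, d x z <= d x y + d y z).

Definition mopen (X : Type) (d : X -> X -> R) (U : set X) : Prop :=
  forall x, U x -> exists2 e : R, 0 < e & forall y, d x y < e -> U y.

Definition mcontinuous (X Y : Type) (dX : X -> X -> R) (dY : Y -> Y -> R)
  (f : X -> Y) : Prop :=
  forall x (e : R), 0 < e -> exists2 de : R, 0 < de &
    forall y, dX x y < de -> dY (f x) (f y) < e.

Definition mhomeomorphism (X Y : Type) (dX : X -> X -> R) (dY : Y -> Y -> R)
  (f : X -> Y) : Prop :=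
  exists g : Y -> X, cancel f g /\ cancel g f /\
    mcontinuous dX dY f /\ mcontinuous dY dX g.

Definition cont_nonneg (h : R -> R) : Prop :=
  forall x (e : R), 0 <= x -> 0 < e -> exists2 de : R, 0 < de &
    forall y, 0 <= y -> `|x - y| < de -> `|h x - h y| < e.

Definition homeo_nonneg (eta : R -> R) : Prop :=
  exists g : R -> R,
    (forall t, 0 <= t -> 0 <= eta t) /\ (forall t, 0 <= t -> 0 <= g t) /\
    (forall t, 0 <= t -> g (eta t) = t) /\ (forall t, 0 <= t -> eta (g t) = t) /\
    cont_nonneg eta /\ cont_nonneg g.

Definition quasi_symmetric (X Y : Type) (dX : X -> X -> R) (dY : Y -> Y -> R)
  (eta : R -> R) (f : X -> Y) : Prop :=
  forall (x a b : X) (t : R), 0 <= t -> dX x a <= t * dX x b ->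
    dY (f x) (f a) <= eta t * dY (f x) (f b).

Local Open Scope ereal_scope.

Definition diam (X : Type) (d : X -> X -> R) (U : set X) : \bar R :=
  ereal_sup [set (d x y)%:E | x in U & y in U].

Definition dist (X : Type) (d : X -> X -> R) (z : X) (S : set X) : \bar R :=
  ereal_inf [set (d z y)%:E | y in S].

Definition mesh (X : Type) (d : X -> X -> R) (F : set (set X)) : \bar R :=
  ereal_sup [set diam d U | U in F].

Definition mesh_at (X : Type) (d : X -> X -> R) (F : set (set X)) (z : X) : \bar R :=
  ereal_sup [set diam d U | U in [set U | F U /\ U z]].

Definition lebesgue_at (X : Type) (d : X -> X -> R) (F : set (set X)) (z : X) : \bar R :=
  Order.min (ereal_sup [set dist d z (~` U) | U in F]) (mesh_at d F z).

Definition lebesgue (X : Type) (d : X -> X -> R) (F : set (set X)) : \bar R :=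
  ereal_inf [set lebesgue_at d F z | z in [set: X]].

Definition cap_loc (X : Type) (d : X -> X -> R) (F : set (set X)) : \bar R :=
  ereal_inf [set lebesgue_at d F z / mesh_at d F z | z in [set: X]].

End Defs.

From HB Require Import structures.
From mathcomp Require Import all_boot all_order all_algebra.
From mathcomp Require Import all_classical all_reals all_analysis.
From mathcomp Require Import lra zify ring.
Import Order.TTheory GRing.Theory Num.Theory.
Import numFieldNormedType.Exports.
Local Open Scope classical_set_scope.
Local Open Scope ring_scope.

Set Implicit Arguments. Unset Strict Implicit.

(* Fix [z].  Let [k] be the least level having a member [U] that contains the
   ball of radius [c0 delta r^k / 2] about [z] and whose image has diameter at
   most [s] (large levels qualify by continuity of [f]).  Some [V] of the
   minimal family contains [U], so [L(V, z) >= c0 delta r^k / 2].  Conversely,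
   every member of the family through [z] has level at least [k - m], where
   [eta (4 r^m / (c0 delta)) <= 1/2]: a member of level [i] through [z]
   reaches distance [c0 delta r^i / 4] from [z], so by quasi-symmetry the
   images of the level-[i + m] members near [z] are small, which makes level
   [i + m] qualify.  Hence [mesh(V, z) <= r^(k - m)], and the local capacity is
   at least [min(1, c0 delta r^m / 2)]. *)

Section HomeoNonneg.
Variables (R : realType) (eta : R -> R).

Lemma cont_nonneg_within (a b : R) :
  0 <= a -> cont_nonneg eta -> {within `[a, b], continuous eta}.
Proof.
move=> a_ge0 eta_cont; apply/subspace_continuousP => x xab.
have x_ge0 : 0 <= x by move: xab; rewrite /= in_itv /= => /andP[+ _]; apply: le_trans.
apply/cvgrPdist_lt => e e_gt0.
have [de de_gt0 close] := eta_cont x e x_ge0 e_gt0.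
rewrite near_withinE; apply/nbhs_normP; exists de => //= y xy yab.
have y_ge0 : 0 <= y by move: yab; rewrite /= in_itv /= => /andP[+ _]; apply: le_trans.
exact: close.
Qed.

Lemma homeo_nonneg0 : homeo_nonneg eta -> eta 0 = 0.
Proof.
move=> [g [eta_ge0 [g_ge0 [gK [etaK [eta_cont _]]]]]].
set c := eta 0; have c_ge0 : 0 <= c by exact: eta_ge0.
apply/eqP; rewrite eq_le c_ge0 andbT leNgt; apply/negP => c_gt0.
have eta_inj x y : 0 <= x -> 0 <= y -> eta x = eta y -> x = y.
  by move=> x_ge0 y_ge0 exy; rewrite -(gK x x_ge0) -(gK y y_ge0) exy.
(* With [eta p = 0] and [eta q = c + 1], the intermediate value [c = eta 0]
   is attained again between [p] and [q], contradicting injectivity. *)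
have attains_c_at0 a b : 0 <= a <= b ->
    Num.min (eta a) (eta b) <= c <= Num.max (eta a) (eta b) -> a <= 0.
  move=> /andP[a_ge0 ab] c_between.
  have [w] := IVT ab (cont_nonneg_within (b := b) a_ge0 eta_cont) c_between.
  rewrite in_itv /= => /andP[aw _] eta_w.
  by rewrite -(eta_inj _ _ (le_trans a_ge0 aw) (lexx 0) eta_w).
have c1_ge0 : 0 <= c + 1 by rewrite addr_ge0.
set p := g 0; set q := g (c + 1).
have p_ge0 : 0 <= p := g_ge0 0 (lexx 0).
have q_ge0 : 0 <= q := g_ge0 _ c1_ge0.
have eta_p : eta p = 0 := etaK 0 (lexx 0).
have eta_q : eta q = c + 1 := etaK _ c1_ge0.
have c_between : Num.min 0 (c + 1) <= c <= Num.max 0 (c + 1).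
  by rewrite ge_min le_max ltW //= lerDl ler01 orbT.
case: (leP q p) => [qp|pq].
- have q0 : q = 0.
    apply/eqP; rewrite eq_le q_ge0 andbT.
    by apply: (attains_c_at0 q p); rewrite ?q_ge0 // eta_p eta_q minC maxC.
  by move: eta_q; rewrite q0 -/c; lra.
- have p_gt0 : 0 < p.
    rewrite lt_def p_ge0 andbT; apply: contraTneq c_gt0 => p0.
    by move: eta_p; rewrite p0 -/c => ->; rewrite ltxx.
  have := attains_c_at0 p q; rewrite p_ge0 (ltW pq) eta_p eta_q => /(_ isT c_between).
  by rewrite leNgt p_gt0.
Qed.

Lemma exists_expr_lt (r e : R) : 0 <= r -> r < 1 -> 0 < e -> exists m : nat, r ^+ m < e.
Proof.
move=> r_ge0 r_lt1 e_gt0.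
have : `|r| < 1 by rewrite ger0_norm.
move/cvg_expr/cvgrPdist_lt/(_ e e_gt0) => [N _ close].
exists N; have := close N (leqnn N).
by rewrite /= sub0r normrN ger0_norm // exprn_ge0.
Qed.

Lemma homeo_nonneg_geometric_small (c r e : R) : homeo_nonneg eta ->
  0 < c -> 0 <= r -> r < 1 -> 0 < e -> exists m : nat, eta (c * r ^+ m) <= e.
Proof.
move=> eta_homeo c_gt0 r_ge0 r_lt1 e_gt0.
have eta0 := homeo_nonneg0 eta_homeo.
have [_ [_ [_ [_ [_ [eta_cont _]]]]]] := eta_homeo.
have [de de_gt0 close] := eta_cont 0 e (lexx 0) e_gt0.
have [m rm] := exists_expr_lt r_ge0 r_lt1 (divr_gt0 de_gt0 c_gt0).
have t_ge0 : 0 <= c * r ^+ m by rewrite mulr_ge0 ?exprn_ge0 // ltW.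
exists m; apply/ltW/(le_lt_trans (ler_norm _)).
rewrite -normrN -sub0r -{1}eta0; apply: close => //.
by rewrite sub0r normrN ger0_norm // mulrC -ltr_pdivlMr.
Qed.

End HomeoNonneg.

Section MetricBounds.
Variables (R : realType) (X : Type) (d : X -> X -> R).
Local Open Scope ereal_scope.

Lemma diam_ubound (U : set X) x y : U x -> U y -> (d x y)%:E <= diam d U.
Proof. by move=> Ux Uy; apply: ereal_sup_ubound; exists x => //; exists y. Qed.

Lemma diam_le (U : set X) (c : R) :
  (forall x y, U x -> U y -> (d x y <= c)%R) -> diam d U <= c%:E.
Proof. by move=> le_c; apply/ereal_supP => _ [x Ux [y Uy <-]]; rewrite lee_fin le_c. Qed.

Lemma diam_le_center (U : set X) (z : X) (e : R) : is_metric d ->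
  (forall x, U x -> (d z x <= e / 2)%R) -> diam d U <= e%:E.
Proof.
move=> [_ [_ [d_sym d_tri]]] le_e; apply: diam_le => x y Ux Uy.
have := d_tri x z y; rewrite (d_sym x z).
have := le_e x Ux; have := le_e y Uy; lra.
Qed.

Lemma diam_gt_far (U : set X) (z : X) (c : R) : is_metric d ->
  c%:E < diam d U -> exists2 a, U a & (c / 2 < d z a)%R.
Proof.
move=> [_ [_ [d_sym d_tri]]] /ereal_sup_gt[_ [x Ux [y Uy <-]]].
rewrite lte_fin => c_lt.
case: (ltP (c / 2)%R (d z x)) => [|zx]; first by exists x.
exists y => //; have := d_tri x z y; rewrite (d_sym x z); lra.
Qed.

Lemma dist_compl_ball (U : set X) (z y : X) (rho : R) :
  rho%:E < dist d z (~` U) -> (d z y <= rho)%R -> U y.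
Proof.
move=> rho_lt zy; apply: contrapT => nUy; move: rho_lt; apply/negP; rewrite -leNgt.
by apply: le_trans (ereal_inf_lbound _) (_ : (d z y)%:E <= _); [exists y | rewrite lee_fin].
Qed.

Lemma le_dist (z : X) (S T : set X) : S `<=` T -> dist d z T <= dist d z S.
Proof. by move=> ST; apply: ereal_inf_le_tmp => _ [y Sy <-]; exists y => //; apply: ST. Qed.

Lemma diam_le_mesh (F : set (set X)) U : F U -> diam d U <= mesh d F.
Proof. by move=> FU; apply: ereal_sup_ubound; exists U. Qed.

Lemma diam_le_mesh_at (F : set (set X)) U z : F U -> U z -> diam d U <= mesh_at d F z.
Proof. by move=> FU Uz; apply: ereal_sup_ubound; exists U. Qed.

Lemma mesh_at_le (F : set (set X)) z c :
  (forall U, F U -> U z -> diam d U <= c) -> mesh_at d F z <= c.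
Proof. by move=> le_c; apply/ereal_supP => _ [U [FU Uz] <-]; apply: le_c. Qed.

Lemma lebesgue_le_sup_dist (F : set (set X)) z :
  lebesgue d F <= ereal_sup [set dist d z (~` U) | U in F].
Proof.
apply: le_trans (_ : lebesgue_at d F z <= _); first by apply: ereal_inf_lbound; exists z.
by rewrite /lebesgue_at ge_min lexx.
Qed.

Lemma lebesgue_at_ge (F : set (set X)) V z : F V ->
  Order.min (dist d z (~` V)) (mesh_at d F z) <= lebesgue_at d F z.
Proof.
by move=> FV; apply: le_min2 => //; apply: ereal_sup_ubound; exists V.
Qed.

End MetricBounds.

Definition cap_bound (R : realType) (c0 delta r : R) (m : nat) : R :=
  Num.min 1 (c0 * delta * r ^+ m / 2).

Section MinimalCover.
Variables (R : realType) (c0 delta r : R) (eta : R -> R) (m : nat).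
Hypotheses (c0_gt0 : 0 < c0) (delta_gt0 : 0 < delta) (r_gt0 : 0 < r) (r_lt1 : r < 1).
Hypothesis eta_ge0 : forall t, 0 <= t -> 0 <= eta t.
Hypothesis eta_m : eta (4 / (c0 * delta) * r ^+ m) <= 1 / 2.

Variables (X Y : Type) (dX : X -> X -> R) (dY : Y -> Y -> R) (f : X -> Y).
Hypotheses (dX_metric : is_metric dX) (dY_metric : is_metric dY).
Hypotheses (f_cont : mcontinuous dX dY f) (f_qs : quasi_symmetric dX dY eta f).

Variable Ulev : nat -> set (set X).
Hypothesis mesh_Ulev : forall j,
  ((delta * r ^+ j)%:E <= mesh dX (Ulev j))%E /\ (mesh dX (Ulev j) <= (r ^+ j)%:E)%E.
Hypothesis lebesgue_Ulev : forall j, (c0%:E * mesh dX (Ulev j) <= lebesgue dX (Ulev j))%E.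
Hypothesis lebesgue_le_diam : forall j U, Ulev j U -> (lebesgue dX (Ulev j) <= diam dX U)%E.

Let cdr_gt0 j : 0 < c0 * delta * r ^+ j.
Proof. by rewrite !mulr_gt0 // exprn_gt0. Qed.

Lemma cap_bound_gt0 : 0 < cap_bound c0 delta r m.
Proof. by rewrite lt_min ltr01 divr_gt0. Qed.

Lemma dist_level_le j U x y : Ulev j U -> U x -> U y -> dX x y <= r ^+ j.
Proof.
move=> Uj Ux Uy; rewrite -lee_fin; apply: le_trans (diam_ubound dX Ux Uy) _.
exact: le_trans (diam_le_mesh dX Uj) (mesh_Ulev j).2.
Qed.

Lemma lebesgue_level_ge j : ((c0 * delta * r ^+ j)%:E <= lebesgue dX (Ulev j))%E.
Proof.
apply: le_trans (lebesgue_Ulev j); rewrite -mulrA EFinM.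
by apply: lee_wpmul2l; [rewrite lee_fin ltW | exact: (mesh_Ulev j).1].
Qed.

Lemma diam_level_ge j U : Ulev j U -> ((c0 * delta * r ^+ j)%:E <= diam dX U)%E.
Proof. by move=> Uj; apply: le_trans (lebesgue_le_diam Uj); apply: lebesgue_level_ge. Qed.

(* Forces [U] to contain the closed ball of radius [c0 delta r^j / 2] about [z]. *)
Definition deep j z (U : set X) := ((c0 * delta * r ^+ j / 2)%:E < dist dX z (~` U))%E.

Lemma deep_mem j z U : deep j z U -> U z.
Proof.
move=> zU; apply: dist_compl_ball zU _.
have [_ [dX_eq _]] := dX_metric.
by rewrite (proj2 (dX_eq z z) erefl) divr_ge0 ?ltW.
Qed.

Lemma exists_deep j z : exists2 U, Ulev j U & deep j z U.
Proof.
have : ((c0 * delta * r ^+ j / 2)%:E < ereal_sup [set dist dX z (~` U) | U in Ulev j])%E.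
  apply: lt_le_trans (le_trans (lebesgue_level_ge j) (lebesgue_le_sup_dist _ _ z)).
  by rewrite lte_fin; have := cdr_gt0 j; lra.
by move/ereal_sup_gt => [_ [U Uj <-] zU]; exists U.
Qed.

Variable s : R.
Hypothesis s_gt0 : 0 < s.

Definition good z k :=
  exists U, [/\ Ulev k U, deep k z U & (diam dY (f @` U) <= s%:E)%E].

Lemma diam_image_le z (U : set X) :
  (forall b, U b -> dY (f z) (f b) <= s / 2) -> (diam dY (f @` U) <= s%:E)%E.
Proof. by move=> near_fz; apply: (diam_le_center (z := f z)) => // _ [b Ub <-]; apply: near_fz. Qed.

Lemma good_level_exists z : exists k, good z k.
Proof.
have [de de_gt0 f_close] := f_cont z (divr_gt0 s_gt0 (ltr0n R 2)).
have [k rk] := exists_expr_lt (ltW r_gt0) r_lt1 de_gt0.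
have [U Uk zU] := exists_deep k z.
exists k, U; split => //; apply: diam_image_le => b Ub; apply/ltW/f_close.
exact: le_lt_trans (dist_level_le Uk (deep_mem zU) Ub) rk.
Qed.

(* [V] reaches out to distance [c0 delta r^i / 4] from [z], while the deep
   member of level [i + m] stays within [r^(i+m)], a [t]-fraction of that;
   quasi-symmetry with [eta t <= 1/2] then halves the image. *)
Lemma good_level_of_member i V z : Ulev i V -> V z ->
  (diam dY (f @` V) <= s%:E)%E -> good z (i + m).
Proof.
move=> Vi Vz fV_le.
pose t := 4 / (c0 * delta) * r ^+ m.
have t_ge0 : 0 <= t by rewrite mulr_ge0 ?exprn_ge0 ?divr_ge0 ?mulr_ge0 ?ltW.
have [a Va za] : exists2 a, V a & c0 * delta * r ^+ i / 2 / 2 < dX z a.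
  apply: diam_gt_far => //; apply: lt_le_trans (diam_level_ge Vi).
  by rewrite lte_fin; have := cdr_gt0 i; lra.
have fa_le : dY (f z) (f a) <= s.
  by rewrite -lee_fin; apply: le_trans fV_le; apply: diam_ubound; [exists z | exists a].
have [U Uim zU] := exists_deep (i + m) z.
exists U; split => //; apply: diam_image_le => b Ub.
have zb : dX z b <= t * dX z a.
  apply: le_trans (dist_level_le Uim (deep_mem zU) Ub) _.
  have -> : r ^+ (i + m) = t * (c0 * delta * r ^+ i / 2 / 2).
    by rewrite /t exprD; field; rewrite !gt_eqF.
  by rewrite ler_wpM2l // ltW.
apply: le_trans (f_qs t_ge0 zb) _.
have := ler_pM (eta_ge0 t_ge0) (proj1 dY_metric _ _) eta_m fa_le; lra.
Qed.

Variable Vs : set (set X).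
Hypothesis Vs_level : forall V, Vs V -> exists j, Ulev j V.
Hypothesis Vs_diam : forall V, Vs V -> (diam dY (f @` V) <= s%:E)%E.
Hypothesis Vs_max : forall j U, Ulev j U -> (diam dY (f @` U) <= s%:E)%E ->
  exists2 V, Vs V & U `<=` V.

Lemma mesh_at_least_good_le z k : (forall i, good z i -> k <= i)%N ->
  (mesh_at dX Vs z <= (r ^+ (k - m))%:E)%E.
Proof.
move=> k_least; apply: mesh_at_le => V Vs_V Vz.
have [i Vi] := Vs_level Vs_V.
case: (leqP (k - m) i) => [ki|ik].
  apply: diam_le => x y Vx Vy.
  exact: le_trans (dist_level_le Vi Vx Vy) (ler_wiXn2l (ltW r_gt0) (ltW r_lt1) ki).
have := k_least _ (good_level_of_member Vi Vz (Vs_diam Vs_V)); lia.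
Qed.

Lemma cap_at_ge z : (exists2 V, Vs V & V z) /\
  ((cap_bound c0 delta r m)%:E <= lebesgue_at dX Vs z / mesh_at dX Vs z)%E.
Proof.
set nu := cap_bound c0 delta r m.
have [k0 good_k0] := good_level_exists z.
have [k /asboolP [U [Uk zU fU_le]] k_least] :=
  ex_minnP (ex_intro (fun k => `[< good z k >]) k0 (asboolT good_k0)).
have [V Vs_V UV] := Vs_max Uk fU_le.
have Vz : V z := UV z (deep_mem zU).
split; first by exists V.
have [j Vj] := Vs_level Vs_V.
have mesh_ge := le_trans (diam_level_ge Vj) (diam_le_mesh_at dX Vs_V Vz).
have mesh_le := mesh_at_least_good_le (fun i gi => k_least i (asboolT gi)).
move: mesh_ge mesh_le; case M_eq: (mesh_at dX Vs z) => [M| |] //= M_ge M_le.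
have M_gt0 : 0 < M by apply: lt_le_trans (cdr_gt0 j) _; rewrite -lee_fin.
rewrite inver (gt_eqF M_gt0) lee_pdivlMr // -EFinM; apply: le_trans (lebesgue_at_ge dX z Vs_V).
rewrite M_eq le_min [X in _ && X]lee_fin.
have nu_le1 : nu <= 1 by rewrite ge_min lexx.
rewrite (ler_piMl (ltW M_gt0) nu_le1) andbT.
apply: le_trans (le_dist dX z (_ : ~` V `<=` ~` U)); last by move=> y + /UV.
apply: le_trans (ltW zU); rewrite lee_fin.
have nu_le : nu <= c0 * delta * r ^+ m / 2 by rewrite ge_min lexx orbT.
have M_le' : M <= r ^+ (k - m) by rewrite -lee_fin.
have rk : r ^+ m * r ^+ (k - m) <= r ^+ k.
  by rewrite -exprD -maxnE (ler_wiXn2l (ltW r_gt0) (ltW r_lt1)) ?leq_maxr.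
apply: le_trans (ler_pM (ltW cap_bound_gt0) (ltW M_gt0) nu_le M_le') _.
have -> : c0 * delta * r ^+ m / 2 * r ^+ (k - m) = c0 * delta / 2 * (r ^+ m * r ^+ (k - m)).
  by ring.
have -> : c0 * delta * r ^+ k / 2 = c0 * delta / 2 * r ^+ k by ring.
by rewrite ler_wpM2l // divr_ge0 ?mulr_ge0 ?ltW.
Qed.

Lemma minimal_cover_cap_loc_ge :
  \bigcup_(V in Vs) V = [set: X] /\ ((cap_bound c0 delta r m)%:E <= cap_loc dX Vs)%E.
Proof.
split; first by rewrite predeqE => z; split => // _; have [[V ? ?] _] := cap_at_ge z; exists V.
by apply: le_ereal_inf_tmp => _ [z _ <-]; exact: (cap_at_ge z).2.
Qed.

End MinimalCover.

Theorem lemma4p9 (R : realType) (c0 delta r : R) (eta : R -> R) :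
  0 < c0 -> 0 < delta -> 0 < r < 1 -> homeo_nonneg eta ->
  exists2 nu : R, 0 < nu &
  forall (X Y : Type) (dX : X -> X -> R) (dY : Y -> Y -> R) (f : X -> Y)
         (n : nat) (Ucol : nat -> 'I_n.+1 -> set (set X)),
    is_metric dX -> is_metric dY ->
    mhomeomorphism dX dY f -> quasi_symmetric dX dY eta f ->
    (exists x y : X, x <> y) ->
    let Ulev := fun j : nat => \bigcup_(a in [set: 'I_n.+1]) Ucol j a in
    (* each U_j is an open covering of X *)
    (forall j U, Ulev j U -> mopen dX U) ->
    (forall j, \bigcup_(U in Ulev j) U = [set: X]) ->
    (* (i) each colour class U_j^a consists of pairwise disjoint sets *)
    (forall j a U V, Ucol j a U -> Ucol j a V -> U <> V -> U `&` V = set0) ->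
    (* (ii) *)
    (forall j, ((delta * r ^+ j)%:E <= mesh dX (Ulev j))%E /\
               (mesh dX (Ulev j) <= (r ^+ j)%:E)%E) ->
    (forall j, (c0%:E * mesh dX (Ulev j) <= lebesgue dX (Ulev j))%E) ->
    (* (iii) U_i is inscribed in U_j for i > j *)
    (forall i j, (j < i)%N -> forall U, Ulev i U -> exists2 V, Ulev j V & U `<=` V) ->
    (* (iv) for each a, the union over j of U_j^a is separated *)
    (forall a U V, (exists j, Ucol j a U) -> (exists j, Ucol j a V) -> U <> V ->
       U `&` V = set0 \/ U `<=` V \/ V `<=` U) ->
    (* additional assumption *)
    (forall j U, Ulev j U -> (lebesgue dX (Ulev j) <= diam dX U)%E) ->
    let Uall := \bigcup_(j in [set: nat]) Ulev j in
    let Us := fun s : R => [set U | Uall U /\ (diam dY (f @` U) <= s%:E)%E] in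
    forall (s : R), 0 < s ->
    forall Vs : set (set X),
      Vs `<=` Us s ->
      (forall U, Us s U -> exists2 V, Vs V & U `<=` V) ->
      (forall V1 V2, Vs V1 -> Vs V2 -> V1 `<=` V2 -> V1 = V2) ->
      \bigcup_(V in Vs) V = [set: X] /\ (nu%:E <= cap_loc dX Vs)%E.
Proof.
move=> c0_gt0 delta_gt0 /andP[r_gt0 r_lt1] eta_homeo.
have [_ [eta_ge0 _]] := eta_homeo.
have [m eta_m] := homeo_nonneg_geometric_small eta_homeo
  (divr_gt0 (ltr0n R 4) (mulr_gt0 c0_gt0 delta_gt0)) (ltW r_gt0) r_lt1
  (divr_gt0 ltr01 (ltr0n R 2)).
exists (cap_bound c0 delta r m); first exact: cap_bound_gt0.
move=> X Y dX dY f n Ucol dX_metric dY_metric [_ [_ [_ [f_cont _]]]] f_qs _ Ulev _ _ _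
  mesh_Ulev lebesgue_Ulev _ _ lebesgue_le_diam Uall Us s s_gt0 Vs Vs_sub Vs_max _.
apply: (minimal_cover_cap_loc_ge c0_gt0 delta_gt0 r_gt0 r_lt1 eta_ge0 eta_m
  dX_metric dY_metric f_cont f_qs mesh_Ulev lebesgue_Ulev lebesgue_le_diam s_gt0).
- by move=> V /Vs_sub[[j _ Vj] _]; exists j.
- by move=> V /Vs_sub[].
- by move=> j U Uj fU_le; apply: Vs_max; split => //; exists j.
Qed.
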